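(* Let $A_1,\dots,A_k$ be $2\times2$ real matrices with all entries strictly positive and norm $<1$, $d_i\in\mathbb R^2$, $T_i(x)=A_ix+d_i$, and assume $T_i(D)\subset D$ for all $i$, where $D$ is the closed unit disc. Then for every $\theta\in\mathbb{PR}^1$, every $n\ge0$ and every $a_1,\dots,a_{n+1}\in\{1,\dots,k\}$, \[ |a_1\cdots a_{n+1}|_\theta-|a_1\cdots a_n|_\theta=|a_{n+1}|_{\phi_{a_n\cdots a_1}(\theta)}. \]
   Context: $\mathbb{PR}^1$ is the space of lines through the origin in $\mathbb R^2$ (directions). For $\theta\in\mathbb{PR}^1$, $\pi_\theta$ is orthogonal projection onto the line through the origin perpendicular to $\theta$ (so fibres are lines in direction $\theta$); $\pi_\theta(D)$ is a segment of length 2. For a word $w=a_1\cdots a_n$, $T_w=T_{a_1}\circ\cdots\circ T_{a_n}$ and $D_w=T_w(D)$ (with $D_\emptyset=D$). The length function is $|w|_\theta=-\log_2\big(|\pi_\theta(D_w)|/2\big)$, where $|\cdot|$ denotes length of an interval. For each $i$, $\phi_i:\mathbb{PR}^1\to\mathbb{PR}^1$ sends a line $\ell$ to $A_i^{-1}(\ell)$, and $\phi_{a_n\cdots a_1}=\phi_{a_n}\circ\cdots\circ\phi_{a_1}$ (the identity for $n=0$). *)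

From HB Require Import structures.
From mathcomp Require Import all_boot all_order all_algebra.
From mathcomp Require Import all_classical all_reals all_analysis.
Set Implicit Arguments. Unset Strict Implicit. Unset Printing Implicit Defensive.
Import Order.TTheory GRing.Theory Num.Theory.
Local Open Scope classical_set_scope.
Local Open Scope ring_scope.

Section Defs.
Variable R : realType.

Definition i0 : 'I_2 := @Ordinal 2 0 isT.
Definition i1 : 'I_2 := @Ordinal 2 1 isT.

Definition dot2 (x y : 'cV[R]_2) : R := x i0 ord0 * y i0 ord0 + x i1 ord0 * y i1 ord0.
Definition norm2 (x : 'cV[R]_2) : R := Num.sqrt (dot2 x x).

Definition disc : set 'cV[R]_2 := [set x | norm2 x <= 1].

Definition opnorm (M : 'M[R]_2) : R := sup [set norm2 (M *m x) | x in disc].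

(* Length of a segment S in the plane = its diameter. *)
Definition seglen (S : set 'cV[R]_2) : R :=
  sup [set r | exists p q, S p /\ S q /\ r = norm2 (p - q)].

(* A direction theta in PR^1 is represented by a nonzero vector v spanning it.
   perp v spans the line through 0 perpendicular to v. *)
Definition perp (v : 'cV[R]_2) : 'cV[R]_2 :=
  \col_(i < 2) (if i == i0 then - v i1 ord0 else v i0 ord0).

Definition proj (v x : 'cV[R]_2) : 'cV[R]_2 :=
  (dot2 x (perp v) / dot2 (perp v) (perp v)) *: perp v.

Definition log2 (x : R) : R := ln x / ln 2.

Variable k : nat.
Variables (A : 'I_k -> 'M[R]_2) (d : 'I_k -> 'cV[R]_2).

Definition T (i : 'I_k) (x : 'cV[R]_2) : 'cV[R]_2 := A i *m x + d i.

Definition Tw (w : seq 'I_k) (x : 'cV[R]_2) : 'cV[R]_2 := foldr T x w.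

Definition Dw (w : seq 'I_k) : set 'cV[R]_2 := Tw w @` disc.

Definition wlen (w : seq 'I_k) (v : 'cV[R]_2) : R :=
  - log2 (seglen (proj v @` Dw w) / 2).

(* phi_i(l) = A_i^{-1}(l); phi_{a_n ... a_1} = phi_{a_n} o ... o phi_{a_1},
   so for w = a_1 ... a_n, phi_{rev w} applies phi_{a_1} first. *)
Definition phi (i : 'I_k) (v : 'cV[R]_2) : 'cV[R]_2 := invmx (A i) *m v.
Definition phiw (w : seq 'I_k) (v : 'cV[R]_2) : 'cV[R]_2 :=
  foldl (fun x i => phi i x) v w.

End Defs.

From Pilot Require Import Defs.
From HB Require Import structures.
From mathcomp Require Import all_boot all_order all_algebra.
From mathcomp Require Import all_classical all_reals all_analysis.
From mathcomp Require Import ring lra.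
Set Implicit Arguments. Unset Strict Implicit. Unset Printing Implicit Defensive.
Import Order.TTheory GRing.Theory Num.Theory.
Local Open Scope classical_set_scope.
Local Open Scope ring_scope.

(* The projection of an affine image [M D + c] of the unit disc onto the line
   perpendicular to [v] is a segment of length [2 |M^T v'| / |v'|], where [v']
   is [v] rotated by a right angle; hence [|w|_v = - log2 (|A_w^T v'| / |v'|)].
   For invertible [M] one has [M^T (M y)' = det M * y'], so this ratio is
   multiplicative along [w -> w a], provided the direction is transported by
   [A_w^-1]; the logarithm turns the product into the claimed sum. *)

Lemma ord2P (i : 'I_2) : i = i0 \/ i = i1.
Proof. by case: i => [[|[|n]] Hi]; [left|right|by []]; exact/val_inj. Qed.

Lemma col2P (T : Type) (x y : 'cV[T]_2) :
  x i0 ord0 = y i0 ord0 -> x i1 ord0 = y i1 ord0 -> x = y.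
Proof. by move=> h0 h1; apply/matrixP => i j; rewrite (ord1 j); case: (ord2P i) => ->. Qed.

Lemma big2 (V : nmodType) (F : 'I_2 -> V) : \sum_(j < 2) F j = F i0 + F i1.
Proof.
rewrite !big_ord_recl big_ord0 addr0.
have -> : (ord0 : 'I_2) = i0 by apply/val_inj.
by have -> : (lift i0 ord0 : 'I_2) = i1 by apply/val_inj.
Qed.

Lemma mulmx2E (S : pzSemiRingType) (M : 'M[S]_2) (x : 'cV[S]_2) i :
  (M *m x) i ord0 = M i i0 * x i0 ord0 + M i i1 * x i1 ord0.
Proof. by rewrite mxE big2. Qed.

Lemma det_mx22 (S : comPzRingType) (M : 'M[S]_2) :
  \det M = M i0 i0 * M i1 i1 - M i0 i1 * M i1 i0.
Proof.
rewrite (expand_det_row M i0) big2 /cofactor !det_mx11 !mxE.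
have -> : lift i0 0 = i1 by apply/val_inj.
have -> : lift i1 (0 : 'I_1) = i0 by apply/val_inj.
by rewrite /= expr0 expr1 !mul1r mulN1r mulrN.
Qed.

Section Plane.
Variable R : realType.
Implicit Types (x y u b c : 'cV[R]_2) (M N : 'M[R]_2).

Lemma dot2Dl x y u : dot2 (x + y) u = dot2 x u + dot2 y u.
Proof. rewrite /dot2 !mxE; ring. Qed.

Lemma dot2Nl x u : dot2 (- x) u = - dot2 x u.
Proof. rewrite /dot2 !mxE; ring. Qed.

Lemma dot2Zl s x u : dot2 (s *: x) u = s * dot2 x u.
Proof. rewrite /dot2 !mxE; ring. Qed.

Lemma dot2C x u : dot2 x u = dot2 u x.
Proof. rewrite /dot2; ring. Qed.

Lemma dot2_mulmxl M x u : dot2 (M *m x) u = dot2 x (M^T *m u).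
Proof. rewrite /dot2 !mulmx2E !mxE; ring. Qed.

Lemma dot2_ge0 x : 0 <= dot2 x x.
Proof. rewrite /dot2; nra. Qed.

Lemma dot2_gt0 x : x != 0 -> 0 < dot2 x x.
Proof.
move=> hx; rewrite lt_neqAle dot2_ge0 andbT; apply: contra hx => /eqP h.
by apply/eqP/col2P; rewrite mxE; move: h; rewrite /dot2; nra.
Qed.

Lemma norm2_ge0 x : 0 <= norm2 x.
Proof. exact: sqrtr_ge0. Qed.

Lemma norm2_gt0 x : x != 0 -> 0 < norm2 x.
Proof. by move=> hx; rewrite /norm2 sqrtr_gt0 dot2_gt0. Qed.

Lemma norm2_sqr x : norm2 x ^+ 2 = dot2 x x.
Proof. by rewrite /norm2 sqr_sqrtr ?dot2_ge0. Qed.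

Lemma norm2Z s x : norm2 (s *: x) = `|s| * norm2 x.
Proof.
by rewrite /norm2 dot2Zl dot2C dot2Zl mulrA -expr2 sqrtrM ?sqr_ge0 // sqrtr_sqr.
Qed.

Lemma norm_dot2_le x b : `|dot2 x b| <= norm2 x * norm2 b.
Proof.
have hsq : dot2 x b ^+ 2 <= (norm2 x * norm2 b) ^+ 2.
  rewrite exprMn !norm2_sqr /dot2.
  have := sqr_ge0 (x i0 ord0 * b i1 ord0 - x i1 ord0 * b i0 ord0); nra.
have hxb := mulr_ge0 (norm2_ge0 x) (norm2_ge0 b).
by rewrite -ler_sqr ?nnegrE // real_normK ?num_real.
Qed.

Lemma perp_neq0 x : x != 0 -> perp x != 0.
Proof.
apply: contra => /eqP/matrixP h; apply/eqP/col2P.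
- by have := h i1 ord0; rewrite !mxE.
- by have := h i0 ord0; rewrite !mxE /= => /eqP; rewrite oppr_eq0 => /eqP.
Qed.

Lemma trmx_mul_perp M y : M^T *m perp (M *m y) = \det M *: perp y.
Proof. by rewrite det_mx22; apply: col2P; rewrite !(mxE, big2) /=; ring. Qed.

Lemma unitmx_mul_neq0 M x : M \in unitmx -> x != 0 -> M *m x != 0.
Proof. by move=> hM; apply: contraNneq => h; rewrite -(mulKmx hM x) h mulmx0. Qed.

(* [proj_ratio M v] is [|pi_v(M D)| / |pi_v(D)|]. *)
Definition proj_ratio M (v : 'cV[R]_2) : R := norm2 (M^T *m perp v) / norm2 (perp v).

Lemma proj_ratio_gt0 M v : M \in unitmx -> v != 0 -> 0 < proj_ratio M v.
Proof.
move=> hM hv; have hp := perp_neq0 hv.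
by rewrite divr_gt0 ?norm2_gt0 ?unitmx_mul_neq0 ?unitmx_tr.
Qed.

Lemma proj_ratio_mul M N v : M \in unitmx -> v != 0 ->
  proj_ratio (M *m N) v = proj_ratio M v * proj_ratio N (invmx M *m v).
Proof.
move=> hM hv; set y := invmx M *m v.
have hMy : M *m y = v by rewrite mulKVmx.
have hy : y != 0 by apply: contraNneq hv => hy0; rewrite -hMy hy0 mulmx0.
have hpy := norm2_gt0 (perp_neq0 hy); have hpv := norm2_gt0 (perp_neq0 hv).
have hMv : norm2 (M^T *m perp v) = `|\det M| * norm2 (perp y).
  by rewrite -{1}hMy trmx_mul_perp norm2Z.
have hMNv : norm2 ((M *m N)^T *m perp v) = `|\det M| * norm2 (N^T *m perp y).
  by rewrite trmx_mul -mulmxA -{1}hMy trmx_mul_perp -scalemxAr norm2Z.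
by rewrite /proj_ratio hMNv hMv; field; rewrite !gt_eqF.
Qed.

Lemma norm2_proj_affineB M c v x y : v != 0 ->
  norm2 (Defs.proj v (M *m x + c) - Defs.proj v (M *m y + c)) =
  `|dot2 x (M^T *m perp v) - dot2 y (M^T *m perp v)| / norm2 (perp v).
Proof.
move=> hv; have hU := norm2_gt0 (perp_neq0 hv).
rewrite /proj -scalerBl norm2Z -mulrBl !dot2Dl !dot2_mulmxl -norm2_sqr normrM.
rewrite (@ger0_norm _ (_ ^- 2)) ?invr_ge0 ?exprn_ge0 ?ltW //.
rewrite opprD addrACA subrr addr0.
by field; rewrite gt_eqF.
Qed.

Lemma seglen_proj_affine_disc (f : 'cV[R]_2 -> 'cV[R]_2) M c v :
  (forall x, f x = M *m x + c) -> v != 0 ->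
  seglen (Defs.proj v @` (f @` @disc R)) = 2 * proj_ratio M v.
Proof.
move=> hf hv; rewrite /proj_ratio; set b := M^T *m perp v.
have hU := norm2_gt0 (perp_neq0 hv); have hB := norm2_ge0 b.
set U := norm2 (perp v) in hU *; set B := norm2 b in hB *.
rewrite /seglen; set E := (X in sup X).
have attained : E (2 * (B / U)).
  pose x := B^-1 *: b.
  have dx : @disc R x.
    rewrite /disc /= /x norm2Z normfV (ger0_norm hB).
    by rewrite -/B; have [->|hB0] := eqVneq B 0; rewrite ?invr0 ?mul0r ?mulVf.
  have dnx : @disc R (- x) by rewrite /disc /= -scaleN1r norm2Z normrN normr1 mul1r.
  exists (Defs.proj v (f x)), (Defs.proj v (f (- x))).
  split; first by exists (f x) => //; exists x.
  split; first by exists (f (- x)) => //; exists (- x).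
  rewrite !hf norm2_proj_affineB // dot2Nl /x dot2Zl -norm2_sqr opprK -/U -/B.
  have -> : B^-1 * B ^+ 2 = B by have [->|hB0] := eqVneq B 0; [rewrite invr0 mul0r|field].
  by rewrite ger0_norm; [rewrite mulrA -mulr2n mulr_natl|rewrite -mulr2n mulrn_wge0].
have bounded : ubound E (2 * (B / U)).
  move=> r [p [q [[_ [x dx <-] <-] [[_ [y dy <-] <-] ->]]]].
  rewrite !hf norm2_proj_affineB // -/b -/U mulrA ler_pM2r ?invr_gt0 //.
  have := norm_dot2_le x b; have := norm_dot2_le y b.
  move: dx dy; rewrite /disc /= -/B => dx dy hy hx.
  have := norm2_ge0 x; have := norm2_ge0 y.
  by move=> hy0 hx0; apply: le_trans (ler_normB _ _) _; nra.
apply/le_anti/andP; split; first by apply: ge_sup => //; exists (2 * (B / U)).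
by apply: ub_le_sup => //; exists (2 * (B / U)).
Qed.

Lemma log2M (x y : R) : 0 < x -> 0 < y -> log2 (x * y) = log2 x + log2 y.
Proof. by move=> hx hy; rewrite /log2 lnM ?posrE // mulrDl. Qed.

End Plane.

Section Words.
Variables (R : realType) (k : nat) (A : 'I_k -> 'M[R]_2) (d : 'I_k -> 'cV[R]_2).

Definition Aw (w : seq 'I_k) : 'M[R]_2 := foldr (fun i M => A i *m M) 1%:M w.

Lemma Tw_affine w : exists c, forall x, Tw A d w x = Aw w *m x + c.
Proof.
elim: w => [|a w [c IH]]; first by exists 0 => x; rewrite /= mul1mx addr0.
by exists (A a *m c + d a) => x; rewrite /= IH /T mulmxDr mulmxA addrA.
Qed.

Lemma Aw_rcons w a : Aw (rcons w a) = Aw w *m A a.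
Proof. by elim: w => [|b w IH] /=; rewrite ?IH ?mulmxA ?mulmx1 ?mul1mx. Qed.

Lemma Aw_seq1 a : Aw [:: a] = A a.
Proof. exact: mulmx1. Qed.

Lemma wlenE w v : v != 0 -> wlen A d w v = - log2 (proj_ratio (Aw w) v).
Proof.
move=> hv; have [c hc] := Tw_affine w.
by rewrite /wlen /Dw (seglen_proj_affine_disc hc hv) [2 * _]mulrC mulfK ?pnatr_eq0.
Qed.

Hypothesis A_unit : forall i, A i \in unitmx.

Lemma Aw_unit w : Aw w \in unitmx.
Proof. by elim: w => [|a w IH] /=; rewrite ?unitmx1 // unitmx_mul A_unit. Qed.

Lemma Aw_phiw w v : Aw w *m phiw A w v = v.
Proof.
elim: w v => [|a w IH] v /=; first by rewrite mul1mx.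
by rewrite -mulmxA IH /phi mulKVmx ?A_unit.
Qed.

Lemma phiwE w v : phiw A w v = invmx (Aw w) *m v.
Proof. by rewrite -{2}(Aw_phiw w v) mulKmx ?Aw_unit. Qed.

End Words.

Unset Implicit Arguments.
Theorem lemma4p2 (R : realType) (k : nat)
  (A : 'I_k -> 'M[R]_2) (d : 'I_k -> 'cV[R]_2)
  (Hpos : forall i p q, 0 < A i p q)
  (Hnorm : forall i, opnorm (A i) < 1)
  (Hinv : forall i, A i \in unitmx)
  (HT : forall i, T A d i @` @disc R `<=` @disc R)
  (v : 'cV[R]_2) (hv : v != 0) (w : seq 'I_k) (a : 'I_k) :
  wlen A d (rcons w a) v - wlen A d w v = wlen A d [:: a] (phiw A w v).
Proof.
have hAw := Aw_unit Hinv w.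
have hy : invmx (Aw A w) *m v != 0 by rewrite unitmx_mul_neq0 ?unitmx_inv.
rewrite phiwE // !wlenE // Aw_seq1 Aw_rcons proj_ratio_mul // log2M ?proj_ratio_gt0 //.
by rewrite opprD addrAC subrr add0r.
Qed.
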